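(* Under the standing setup (in either Scenario I or Scenario II), assume $0<h<\frac{1}{d_{\max}}$ and that the expected graph is strongly connected. Then: (i) For the discrete-time system $x(t_{k+1})=(I-hL_{\sigma_k})^{\bar k}x(t_k)$, for every $x(0)\in\mathbb{R}^n$, $\lim_{k\to\infty}\mathbb{E}[x(t_k)]=\mathbf{1}\bar\pi_1^T x(0)$, where $W_1=\mathbb{E}[(I-hL_{\sigma_k})^{\bar k}]=\sum_{i=1}^4 p_i (I-hL_i)^{\bar k}$ satisfies $\lim_{k\to\infty}W_1^k=\mathbf{1}\bar\pi_1^T$, and $\bar\pi_1>0$ (entrywise) is a left eigenvector of $W_1$ for eigenvalue $1$ with $\bar\pi_1^T\mathbf{1}=1$. (ii) For the limiting ($h\to0$) system $x(t_{k+1})=e^{-L_{\sigma_k}\Delta}x(t_k)$, for every $x(0)\in\mathbb{R}^n$, $\lim_{k\to\infty}\mathbb{E}[x(t_k)]=\mathbf{1}\bar\pi_2^T x(0)$, where $W_2=\mathbb{E}[e^{-L_{\sigma_k}\Delta}]=\sum_{i=1}^4 p_i e^{-L_i\Delta}$ satisfies $\lim_{k\to\infty}W_2^k=\mathbf{1}\bar\pi_2^T$, and $\bar\pi_2>0$ is a left eigenvector of $W_2$ for eigenvalue $1$ with $\bar\pi_2^T\mathbf{1}=1$. In particular both systems reach consensus in mean.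
   Context: Standing setup. $n\ge3$ agents. $G$ is an undirected connected graph on $\{1,\dots,n\}$ with symmetric $0/1$ adjacency matrix $A=[a_{ij}]$ (zero diagonal), degrees $d_i=\sum_j a_{ij}$, $d_{\max}=\max_i d_i$, and Laplacian $L=\mathrm{diag}(d_1,\dots,d_n)-A$, with entries $l_{ij}$. For a (possibly directed) $0/1$ adjacency matrix $B$ ($b_{ij}=1$ meaning agent $i$ receives from agent $j$), its Laplacian is $\mathrm{diag}(B\mathbf{1})-B$. Scenario I (agents 1,2 may fail to receive): $A_1$ is $A$ with row 1 set to zero, $A_2$ is $A$ with row 2 set to zero, $A_3$ is $A$ with rows 1 and 2 set to zero, $A_4=A$. Scenario II (agents 1,2 may fail to send): same with columns instead of rows. $L_i$ is the Laplacian of $A_i$ (so $L_4=L$). Probabilities $p_1=\alpha,p_2=\beta,p_3=\gamma,p_4=\theta\in(0,1)$ with $\alpha+\beta+\gamma+\theta=1$. The expected graph is the directed graph with weighted adjacency matrix $\sum_{i=1}^4 p_iA_i$. Sampling period $h>0$, integer $\bar k\ge1$, $\Delta=\bar k h$, $t_k=k\Delta$. $\sigma_0,\sigma_1,\dots$ are i.i.d. random variables in $\{1,2,3,4\}$ with $P(\sigma_k=i)=p_i$ (the graph is held fixed on each interval of length $\Delta$, during which the delta-operator system $\delta x=-L_{\sigma_k}x$ with step $h$ is run $\bar k$ times). The initial state $x(t_0)=x(0)\in\mathbb{R}^n$ is deterministic. $\mathbf{1}$ is the all-ones column vector. *)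

(* Matrices are represented as functions nat -> nat -> R, vectors as
   nat -> R; only indices 0..n-1 are meaningful.  Agent k (1-based in the
   paper) is index k-1 here, so agents 1,2 are indices 0,1. *)
From Stdlib Require Import Reals Lra List Arith.
Import ListNotations.
Open Scope R_scope.

Definition Vec := nat -> R.
Definition Mat := nat -> nat -> R.

Fixpoint rsum (n : nat) (f : nat -> R) : R :=
  match n with O => 0 | S m => rsum m f + f m end.

Fixpoint rmaxn (n : nat) (f : nat -> R) : R :=
  match n with O => 0 | S m => Rmax (rmaxn m f) (f m) end.

Definition mid : Mat := fun i j => if Nat.eqb i j then 1 else 0.
Definition madd (A B : Mat) : Mat := fun i j => A i j + B i j.
Definition mscal (c : R) (A : Mat) : Mat := fun i j => c * A i j.
Definition mmul (n : nat) (A B : Mat) : Mat :=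
  fun i j => rsum n (fun k => A i k * B k j).
Definition mvec (n : nat) (A : Mat) (x : Vec) : Vec :=
  fun i => rsum n (fun k => A i k * x k).
Fixpoint mpow (n : nat) (A : Mat) (k : nat) : Mat :=
  match k with O => mid | S k' => mmul n A (mpow n A k') end.

Definition aR (a : nat -> nat -> bool) : Mat :=
  fun i j => if a i j then 1 else 0.

Definition deg (n : nat) (a : nat -> nat -> bool) (i : nat) : R :=
  rsum n (aR a i).
Definition dmax (n : nat) (a : nat -> nat -> bool) : R :=
  rmaxn n (deg n a).

Definition lap (n : nat) (B : Mat) : Mat :=
  fun i j => (if Nat.eqb i j then rsum n (B i) else 0) - B i j.

Definition sym_irrefl (n : nat) (a : nat -> nat -> bool) : Prop :=
  (forall i j, (i < n)%nat -> (j < n)%nat -> a i j = a j i) /\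
  (forall i, (i < n)%nat -> a i i = false).

Inductive reach (n : nat) (adj : nat -> nat -> Prop) (i : nat) : nat -> Prop :=
| reach_refl : (i < n)%nat -> reach n adj i i
| reach_step : forall j k, reach n adj i j -> adj j k -> (k < n)%nat ->
               reach n adj i k.

Definition strongly_connected (n : nat) (adj : nat -> nat -> Prop) : Prop :=
  forall i j, (i < n)%nat -> (j < n)%nat -> reach n adj i j.

Definition connected (n : nat) (a : nat -> nat -> bool) : Prop :=
  strongly_connected n (fun i j => a i j = true).

(* Failure pattern: index k is the failing agent under mode m
   (m = 1: agent 1; m = 2: agent 2; m = 3: agents 1 and 2; m = 4: none). *)
Definition fails (m k : nat) : bool :=
  match m with
  | 1%nat => Nat.eqb k 0
  | 2%nat => Nat.eqb k 1
  | 3%nat => Nat.leb k 1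
  | _ => false
  end.

(* Scenario I (scen = true): rows of failing agents zeroed (cannot receive).
   Scenario II (scen = false): columns zeroed (cannot send). *)
Definition Amode (scen : bool) (a : nat -> nat -> bool) (m : nat) : Mat :=
  fun i j =>
    if (if scen then fails m i else fails m j) then 0 else aR a i j.

Definition Lmode (n : nat) (scen : bool) (a : nat -> nat -> bool) (m : nat) : Mat :=
  lap n (Amode scen a m).

Definition prob (al be ga th : R) (m : nat) : R :=
  match m with
  | 1%nat => al | 2%nat => be | 3%nat => ga | _ => th
  end.

Definition modes : list nat := [1; 2; 3; 4]%nat.

Definition msum4 (f : nat -> Mat) : Mat :=
  fun i j => f 1%nat i j + f 2%nat i j + f 3%nat i j + f 4%nat i j.

Definition expected_adj (scen : bool) (a : nat -> nat -> bool) (al be ga th : R) : Mat :=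
  msum4 (fun m => mscal (prob al be ga th m) (Amode scen a m)).

Fixpoint seqs (k : nat) : list (list nat) :=
  match k with
  | O => [[]]
  | S k' => flat_map (fun m => map (cons m) (seqs k')) modes
  end.

Definition weight (p : nat -> R) (s : list nat) : R :=
  fold_right (fun m r => p m * r) 1 s.

Fixpoint traj (n : nat) (M : nat -> Mat) (s : list nat) (x : Vec) : Vec :=
  match s with
  | [] => x
  | m :: s' => traj n M s' (mvec n (M m) x)
  end.

(* E[x(t_k)] for x(t_{j+1}) = M_{sigma_j} x(t_j), sigma_j i.i.d. with law p,
   x(t_0) = x0 deterministic: the finite expectation over {1..4}^k. *)
Definition expect_state (n : nat) (M : nat -> Mat) (p : nat -> R) (k : nat)
  (x0 : Vec) : Vec :=
  fun i => fold_right Rplus 0 (map (fun s => weight p s * traj n M s x0 i) (seqs k)).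

Definition is_mexp (n : nat) (M E : Mat) : Prop :=
  forall i j, (i < n)%nat -> (j < n)%nat ->
    Un_cv (fun N => sum_f_R0 (fun k => mpow n M k i j / INR (fact k)) N) (E i j).

Definition consensus_in_mean (n : nat) (M : nat -> Mat) (p : nat -> R) : Prop :=
  let W := msum4 (fun m => mscal (p m) (M m)) in
  exists pi : Vec,
    (forall i, (i < n)%nat -> 0 < pi i) /\
    rsum n pi = 1 /\
    (forall j, (j < n)%nat -> rsum n (fun i => pi i * W i j) = pi j) /\
    (forall i j, (i < n)%nat -> (j < n)%nat ->
       Un_cv (fun k => mpow n W k i j) (pi j)) /\
    (forall x0 : Vec, forall i, (i < n)%nat ->
       Un_cv (fun k => expect_state n M p k x0 i) (rsum n (fun j => pi j * x0 j))).

From Stdlib Require Import Reals Lra Lia List Arith IndefiniteDescription FunctionalExtensionality.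
From Coquelicot Require Hierarchy Series.
Open Scope R_scope.

(* Taking expectations turns the switched recursion into [x(t_{k+1}) = W x(t_k)]
   for the mean [W] of the four one-step matrices, so both parts reduce to the
   convergence of [W ^ k].  Every one-step matrix is stochastic with positive
   diagonal: [(I - h L_i) ^ kbar] because [h d_max < 1], and [e^(- L_i Delta)]
   because it equals [e^(- c) e^(c I - L_i Delta)] with [c = Delta d_max] and
   [c I - L_i Delta >= 0].  The failure-free mode has positive probability and
   is positive on the edges of [G], so [W] is stochastic with positive diagonal
   and strongly connected graph.  Hence some power [W ^ K] has all entries at
   least some [d > 0]; each block of [K] steps shrinks the range of the state by
   the factor [1 - d], and [W ^ k] converges to [1 pi^T]. *)

Lemma rsum_ext n f g : (forall k, (k < n)%nat -> f k = g k) -> rsum n f = rsum n g.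
Proof.
  induction n as [|n IH]; intros H; simpl; [reflexivity|].
  rewrite IH by (intros; apply H; lia). rewrite H by lia. reflexivity.
Qed.

Lemma rsum_le n f g : (forall k, (k < n)%nat -> f k <= g k) -> rsum n f <= rsum n g.
Proof.
  induction n as [|n IH]; intros H; simpl; [lra|].
  assert (f n <= g n) by (apply H; lia).
  assert (rsum n f <= rsum n g) by (apply IH; intros; apply H; lia). lra.
Qed.

Lemma rsum_plus n f g : rsum n (fun k => f k + g k) = rsum n f + rsum n g.
Proof. induction n as [|n IH]; simpl; [lra|]. rewrite IH; ring. Qed.

Lemma rsum_minus n f g : rsum n (fun k => f k - g k) = rsum n f - rsum n g.
Proof. induction n as [|n IH]; simpl; [lra|]. rewrite IH; ring. Qed.

Lemma rsum_scal n c f : rsum n (fun k => c * f k) = c * rsum n f.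
Proof. induction n as [|n IH]; simpl; [ring|]. rewrite IH; ring. Qed.

Lemma rsum_0 n : rsum n (fun _ => 0) = 0.
Proof. induction n as [|n IH]; simpl; [lra|]. rewrite IH; ring. Qed.

Lemma rsum_nonneg n f : (forall k, (k < n)%nat -> 0 <= f k) -> 0 <= rsum n f.
Proof. intros H. rewrite <- (rsum_0 n). apply rsum_le. exact H. Qed.

Lemma rsum_ge_term n f j :
  (forall k, (k < n)%nat -> 0 <= f k) -> (j < n)%nat -> f j <= rsum n f.
Proof.
  induction n as [|n IH]; intros H Hj; [lia|]. simpl.
  destruct (Nat.eq_dec j n) as [->|Hjn].
  - assert (0 <= rsum n f) by (apply rsum_nonneg; intros; apply H; lia). lra.
  - assert (f j <= rsum n f) by (apply IH; [intros; apply H; lia | lia]).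
    assert (0 <= f n) by (apply H; lia). lra.
Qed.

Lemma rsum_swap n m (f : nat -> nat -> R) :
  rsum n (fun i => rsum m (f i)) = rsum m (fun j => rsum n (fun i => f i j)).
Proof.
  induction n as [|n IH]; simpl.
  - symmetry. apply rsum_0.
  - rewrite IH, <- rsum_plus. reflexivity.
Qed.

Lemma rsum_sum_f_R0 n K (f : nat -> nat -> R) :
  rsum n (fun l => sum_f_R0 (f l) K) = sum_f_R0 (fun k => rsum n (fun l => f l k)) K.
Proof.
  induction n as [|n IH]; simpl.
  - induction K as [|K IHK]; simpl; [reflexivity|]. rewrite <- IHK. ring.
  - rewrite IH, <- sum_plus. reflexivity.
Qed.

Lemma mid_eq i : mid i i = 1.
Proof. unfold mid. rewrite Nat.eqb_refl. reflexivity. Qed.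

Lemma mid_neq i j : i <> j -> mid i j = 0.
Proof. intros H. unfold mid. apply Nat.eqb_neq in H. rewrite H. reflexivity. Qed.

Lemma rsum_mid_l n i f : (i < n)%nat -> rsum n (fun k => mid i k * f k) = f i.
Proof.
  induction n as [|n IH]; intros Hi; [lia|]. simpl.
  destruct (Nat.eq_dec i n) as [->|Hin].
  - rewrite mid_eq, (rsum_ext _ _ (fun _ => 0)), rsum_0; [ring|].
    intros k Hk. rewrite mid_neq by lia. ring.
  - rewrite IH, mid_neq by lia. ring.
Qed.

Lemma rsum_mid_r n j f : (j < n)%nat -> rsum n (fun k => f k * mid k j) = f j.
Proof.
  intros Hj. rewrite <- (rsum_mid_l n j f Hj). apply rsum_ext. intros k _.
  unfold mid. rewrite Nat.eqb_sym. ring.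
Qed.

Lemma Un_cv_ext u v l : (forall k, u k = v k) -> Un_cv u l -> Un_cv v l.
Proof.
  intros H Hu eps Heps. destruct (Hu eps Heps) as [N HN].
  exists N. intros k Hk. rewrite <- H. auto.
Qed.

Lemma Un_cv_const c : Un_cv (fun _ => c) c.
Proof.
  intros eps Heps. exists 0%nat. intros. unfold R_dist.
  rewrite Rminus_diag, Rabs_R0. lra.
Qed.

Lemma Un_cv_shift u l : Un_cv u l -> Un_cv (fun k => u (S k)) l.
Proof.
  intros Hu eps Heps. destruct (Hu eps Heps) as [N HN].
  exists N. intros k Hk. apply HN. lia.
Qed.

Lemma Un_cv_ge_eventually u l b N :
  Un_cv u l -> (forall k, (N <= k)%nat -> b <= u k) -> b <= l.
Proof.
  intros Hu Hb. destruct (Rle_dec b l) as [|Hbl]; auto. exfalso.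
  destruct (Hu (b - l)) as [N1 HN1]; [lra|].
  specialize (HN1 (Nat.max N N1) ltac:(lia)). specialize (Hb (Nat.max N N1) ltac:(lia)).
  unfold R_dist in HN1. apply Rabs_def2 in HN1. lra.
Qed.

Lemma CV_rsum m (f : nat -> nat -> R) (l : nat -> R) :
  (forall j, (j < m)%nat -> Un_cv (fun k => f k j) (l j)) ->
  Un_cv (fun k => rsum m (f k)) (rsum m l).
Proof.
  induction m as [|m IH]; intros H; simpl.
  - apply Un_cv_const.
  - apply CV_plus; [apply IH; intros; apply H; lia | apply H; lia].
Qed.

Lemma exists_pow_mul_lt r w eps :
  0 <= r < 1 -> 0 <= w -> 0 < eps -> exists q, r ^ q * w < eps.
Proof.
  intros Hr Hw Heps.
  destruct (pow_lt_1_zero r) with (y := eps / (w + 1)) as [q Hq].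
  { rewrite Rabs_pos_eq; lra. }
  { apply Rdiv_lt_0_compat; lra. }
  exists q. specialize (Hq q (le_n q)). rewrite Rabs_pos_eq in Hq by (apply pow_le; lra).
  apply Rle_lt_trans with (eps / (w + 1) * w); [apply Rmult_le_compat_r; lra|].
  apply Rlt_le_trans with (eps / (w + 1) * (w + 1)).
  - apply Rmult_lt_compat_l; [apply Rdiv_lt_0_compat|]; lra.
  - right. field. lra.
Qed.

Lemma nested_intervals (lo hi : nat -> R) :
  Un_growing lo -> Un_decreasing hi -> (forall q, lo q <= hi q) ->
  exists c, forall q, lo q <= c <= hi q.
Proof.
  intros Hlo Hhi Hle.
  assert (Hcross : forall q k, lo k <= hi q).
  { intros q k. destruct (Nat.le_ge_cases k q).
    - pose proof (tech9 lo Hlo k q ltac:(lia)). pose proof (Hle q). lra.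
    - pose proof (decreasing_prop hi q k Hhi ltac:(lia)). pose proof (Hle k). lra. }
  destruct (growing_cv lo Hlo) as [c Hc].
  { exists (hi 0%nat). intros y [k ->]. apply Hcross. }
  exists c. intros q. split.
  - apply growing_ineq; auto.
  - apply (Rle_cv_lim (Vn := fun _ => hi q) (fun k => Hcross q k) Hc (Un_cv_const _)).
Qed.

Lemma squeeze_cv (lo hi u : nat -> R) c (N : nat -> nat) :
  (forall q, lo q <= c <= hi q) ->
  (forall eps, 0 < eps -> exists q, hi q - lo q < eps) ->
  (forall q k, (N q <= k)%nat -> lo q <= u k <= hi q) -> Un_cv u c.
Proof.
  intros Hc Hw Hu eps Heps. destruct (Hw eps Heps) as [q Hq].
  exists (N q). intros k Hk. specialize (Hu q k Hk). specialize (Hc q).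
  unfold R_dist. apply Rabs_def1; lra.
Qed.

(** * Stochastic matrices *)

Definition mat_nonneg n (A : Mat) : Prop :=
  forall i j, (i < n)%nat -> (j < n)%nat -> 0 <= A i j.

Definition row_sums n (A : Mat) (r : R) : Prop :=
  forall i, (i < n)%nat -> rsum n (A i) = r.

Definition stochastic n (A : Mat) : Prop := mat_nonneg n A /\ row_sums n A 1.

Lemma mmul_nonneg n A B : mat_nonneg n A -> mat_nonneg n B -> mat_nonneg n (mmul n A B).
Proof.
  intros HA HB i j Hi Hj. apply rsum_nonneg. intros k Hk. apply Rmult_le_pos; auto.
Qed.

Lemma mid_nonneg n : mat_nonneg n mid.
Proof. intros i j _ _. unfold mid. destruct (Nat.eqb i j); lra. Qed.

Lemma mpow_nonneg n A k : mat_nonneg n A -> mat_nonneg n (mpow n A k).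
Proof.
  intros HA. induction k as [|k IH]; simpl; [apply mid_nonneg | apply mmul_nonneg; auto].
Qed.

Lemma mmul_row_sums n A B rA rB :
  row_sums n A rA -> row_sums n B rB -> row_sums n (mmul n A B) (rA * rB).
Proof.
  intros HA HB i Hi. unfold mmul.
  rewrite (rsum_swap n n (fun j l => A i l * B l j)).
  rewrite (rsum_ext _ _ (fun l => rB * A i l)).
  - rewrite rsum_scal, HA by exact Hi. ring.
  - intros l Hl. rewrite rsum_scal, HB by exact Hl. ring.
Qed.

Lemma mid_row_sums n : row_sums n mid 1.
Proof.
  intros i Hi. rewrite <- (rsum_mid_l n i (fun _ => 1) Hi).
  apply rsum_ext. intros; ring.
Qed.

Lemma mpow_row_sums n A r k : row_sums n A r -> row_sums n (mpow n A k) (r ^ k).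
Proof.
  intros HA. induction k as [|k IH]; simpl; [apply mid_row_sums | apply mmul_row_sums; auto].
Qed.

Lemma mpow_stochastic n A k : stochastic n A -> stochastic n (mpow n A k).
Proof.
  intros [HA HA1]. split; [apply mpow_nonneg; auto|].
  rewrite <- (pow1 k). apply mpow_row_sums; auto.
Qed.

Lemma stochastic_le_1 n A i j :
  stochastic n A -> (i < n)%nat -> (j < n)%nat -> A i j <= 1.
Proof.
  intros [HA HA1] Hi Hj. rewrite <- (HA1 i Hi).
  apply (rsum_ge_term n (A i)); auto.
Qed.

Lemma mmul_ge_term n A B i l j :
  mat_nonneg n A -> mat_nonneg n B -> (i < n)%nat -> (l < n)%nat -> (j < n)%nat ->
  A i l * B l j <= mmul n A B i j.
Proof.
  intros HA HB Hi Hl Hj.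
  apply (rsum_ge_term n (fun k => A i k * B k j)); auto.
  intros k Hk. apply Rmult_le_pos; auto.
Qed.

Lemma mpow_1 n A i j : (j < n)%nat -> mpow n A 1 i j = A i j.
Proof. intros Hj. apply rsum_mid_r. exact Hj. Qed.

Lemma mpow_diag_pos n A k i :
  mat_nonneg n A -> (i < n)%nat -> 0 < A i i -> 0 < mpow n A k i i.
Proof.
  intros HA Hi Hd. induction k as [|k IH].
  - simpl. rewrite mid_eq. lra.
  - eapply Rlt_le_trans; [|apply (mmul_ge_term n A (mpow n A k) i i i); auto].
    + apply Rmult_lt_0_compat; auto.
    + apply mpow_nonneg; auto.
Qed.

Lemma mpow_entry_pos n A k i j :
  mat_nonneg n A -> (i < n)%nat -> (j < n)%nat -> 0 < A i i -> 0 < A i j ->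
  0 < mpow n A (S k) i j.
Proof.
  intros HA Hi Hj Hd He. induction k as [|k IH].
  - rewrite mpow_1; auto.
  - eapply Rlt_le_trans; [|apply (mmul_ge_term n A (mpow n A (S k)) i i j); auto].
    + apply Rmult_lt_0_compat; auto.
    + apply mpow_nonneg; auto.
Qed.

Definition vbounded n (a b : R) (x : Vec) : Prop :=
  forall i, (i < n)%nat -> a <= x i <= b.

Lemma mvec_affine n P c e x i :
  row_sums n P 1 -> (i < n)%nat ->
  mvec n P (fun j => c * x j + e) i = c * mvec n P x i + e.
Proof.
  intros HP Hi. unfold mvec.
  rewrite (rsum_ext _ _ (fun k => c * (P i k * x k) + e * P i k)) by (intros; ring).
  rewrite rsum_plus, !rsum_scal, HP by exact Hi. ring.
Qed.

(* Every row of [P] puts weight at least [d] on the entry [x 0], so the whole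
   image moves towards [x 0] by a fraction [d] of the distance to each end. *)
Lemma mvec_contract n P d a b x :
  (0 < n)%nat -> row_sums n P 1 -> 0 <= d ->
  (forall i j, (i < n)%nat -> (j < n)%nat -> d <= P i j) ->
  vbounded n a b x ->
  vbounded n (a + d * (x 0%nat - a)) (b + d * (x 0%nat - b)) (mvec n P x).
Proof.
  intros Hn HP Hd HPd Hx i Hi.
  assert (Hweight : forall y, (forall j, (j < n)%nat -> 0 <= y j) ->
            d * y 0%nat <= mvec n P y i).
  { intros y Hy. apply Rle_trans with (P i 0%nat * y 0%nat).
    - apply Rmult_le_compat_r; auto.
    - apply (rsum_ge_term n (fun k => P i k * y k)); auto.
      intros k Hk. apply Rmult_le_pos; [pose proof (HPd i k Hi Hk); lra | auto]. }
  assert (Hlo : d * (1 * x 0%nat + - a) <= mvec n P (fun j => 1 * x j + - a) i)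
    by (apply (Hweight (fun j => 1 * x j + - a)); intros j Hj; specialize (Hx j Hj); lra).
  assert (Hhi : d * (-1 * x 0%nat + b) <= mvec n P (fun j => -1 * x j + b) i)
    by (apply (Hweight (fun j => -1 * x j + b)); intros j Hj; specialize (Hx j Hj); lra).
  rewrite mvec_affine in Hlo, Hhi by auto. split; lra.
Qed.

Lemma mvec_bounded n P a b x :
  (0 < n)%nat -> stochastic n P -> vbounded n a b x -> vbounded n a b (mvec n P x).
Proof.
  intros Hn [HP HP1] Hx i Hi.
  pose proof (mvec_contract n P 0 a b x Hn HP1 (Rle_refl 0) HP Hx i Hi). lra.
Qed.

Definition iter_mvec n (W : Mat) (k : nat) (x : Vec) : Vec := Nat.iter k (mvec n W) x.

Lemma iter_mvec_add n W p q x :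
  iter_mvec n W (p + q) x = iter_mvec n W p (iter_mvec n W q x).
Proof. apply Nat.iter_add. Qed.

Lemma iter_mvec_S_r n W k x :
  iter_mvec n W (S k) x = iter_mvec n W k (mvec n W x).
Proof. apply Nat.iter_succ_r. Qed.

Lemma iter_mvec_mpow n W k x i :
  (i < n)%nat -> iter_mvec n W k x i = mvec n (mpow n W k) x i.
Proof.
  revert i. induction k as [|k IH]; intros i Hi.
  - unfold iter_mvec, mvec. simpl. rewrite rsum_mid_l by exact Hi. reflexivity.
  - unfold iter_mvec. rewrite Nat.iter_succ. fold (iter_mvec n W k x).
    unfold mvec at 1.
    rewrite (rsum_ext _ _ (fun l => rsum n (fun j => W i l * (mpow n W k l j * x j)))).
    + rewrite rsum_swap. apply rsum_ext. intros j _. simpl. unfold mmul.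
      rewrite <- (Rmult_comm (x j)), <- rsum_scal. apply rsum_ext. intros; ring.
    + intros l Hl. rewrite IH by exact Hl. unfold mvec. rewrite <- rsum_scal. reflexivity.
Qed.

Lemma mpow_iter_mvec n W k i j :
  (i < n)%nat -> (j < n)%nat -> mpow n W k i j = iter_mvec n W k (fun l => mid l j) i.
Proof.
  intros Hi Hj. rewrite iter_mvec_mpow by exact Hi. unfold mvec.
  symmetry. apply (rsum_mid_r n j (mpow n W k i)). exact Hj.
Qed.

Lemma iter_mvec_bounded n W k a b x :
  (0 < n)%nat -> stochastic n W -> vbounded n a b x -> vbounded n a b (iter_mvec n W k x).
Proof.
  intros Hn HW Hx i Hi. rewrite iter_mvec_mpow by exact Hi.
  apply mvec_bounded; auto. apply mpow_stochastic. exact HW.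
Qed.

Lemma iter_mvec_cv n W (pi : Vec) x i :
  (forall i j, (i < n)%nat -> (j < n)%nat -> Un_cv (fun k => mpow n W k i j) (pi j)) ->
  (i < n)%nat ->
  Un_cv (fun k => iter_mvec n W k x i) (rsum n (fun j => pi j * x j)).
Proof.
  intros Hpi Hi.
  apply (Un_cv_ext (fun k => rsum n (fun j => mpow n W k i j * x j))).
  { intros k. rewrite iter_mvec_mpow by exact Hi. reflexivity. }
  apply CV_rsum. intros j Hj. apply CV_mult; [apply Hpi; auto | apply Un_cv_const].
Qed.

(** * Powers of a primitive stochastic matrix *)

Lemma reach_dst_lt n adj l i : reach n adj l i -> (i < n)%nat.
Proof. induction 1; auto. Qed.

Lemma reach_src_lt n adj l i : reach n adj l i -> (l < n)%nat.
Proof. induction 1; auto. Qed.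

Lemma reach_mono n (adj1 adj2 : nat -> nat -> Prop) i j :
  (forall u v, (u < n)%nat -> (v < n)%nat -> adj1 u v -> adj2 u v) ->
  reach n adj1 i j -> reach n adj2 i j.
Proof.
  intros H Hr. induction Hr as [Hi | j k Hr IH Hjk Hk].
  - apply reach_refl; auto.
  - apply reach_step with j; auto. apply H; auto. eapply reach_dst_lt; eauto.
Qed.

(* Positive diagonal keeps an entry positive once it has become positive. *)
Lemma mpow_pos_eventually n W l i :
  mat_nonneg n W -> (forall i, (i < n)%nat -> 0 < W i i) ->
  reach n (fun u v => 0 < W v u) l i ->
  exists K, forall k, (K <= k)%nat -> 0 < mpow n W k i l.
Proof.
  intros HW Hd Hr. induction Hr as [Hl | j i Hr IH Hji Hi].
  - exists 0%nat. intros k _. apply mpow_diag_pos; auto.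
  - destruct IH as [K HK]. exists (S K). intros [|k] Hk; [lia|].
    assert (Hj : (j < n)%nat) by (eapply reach_dst_lt; eauto).
    assert (Hl : (l < n)%nat) by (eapply reach_src_lt; eauto).
    eapply Rlt_le_trans; [|apply (mmul_ge_term n W (mpow n W k) i j l); auto].
    + apply Rmult_lt_0_compat; auto. apply HK. lia.
    + apply mpow_nonneg; auto.
Qed.

Lemma eventually_forall_lt N (P : nat -> nat -> Prop) :
  (forall i, (i < N)%nat -> exists K, forall k, (K <= k)%nat -> P i k) ->
  exists K, forall i, (i < N)%nat -> forall k, (K <= k)%nat -> P i k.
Proof.
  induction N as [|N IH]; intros H.
  - exists 0%nat. intros; lia.
  - destruct IH as [K1 HK1]; [intros i Hi; apply H; lia|].
    destruct (H N ltac:(lia)) as [K2 HK2]. exists (Nat.max K1 K2).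
    intros i Hi k Hk. destruct (Nat.eq_dec i N) as [->|HiN].
    + apply HK2. lia.
    + apply HK1; lia.
Qed.

Lemma finite_common_pos N (P : nat -> R -> Prop) :
  (forall i d d', 0 < d' <= d -> P i d -> P i d') ->
  (forall i, (i < N)%nat -> exists d, 0 < d /\ P i d) ->
  exists d, 0 < d /\ forall i, (i < N)%nat -> P i d.
Proof.
  intros Hdown. induction N as [|N IH]; intros H.
  - exists 1. split; [lra | intros; lia].
  - destruct IH as [d1 [Hd1 H1]]; [intros i Hi; apply H; lia|].
    destruct (H N ltac:(lia)) as [d2 [Hd2 H2]].
    assert (Hmin : 0 < Rmin d1 d2) by (apply Rmin_pos; auto).
    exists (Rmin d1 d2). split; auto. intros i Hi. destruct (Nat.eq_dec i N) as [->|HiN].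
    + apply (Hdown _ d2); auto. split; [auto | apply Rmin_r].
    + apply (Hdown _ d1); [split; [auto | apply Rmin_l] | apply H1; lia].
Qed.

Lemma mpow_uniformly_pos n W :
  mat_nonneg n W -> (forall i, (i < n)%nat -> 0 < W i i) ->
  strongly_connected n (fun i j => 0 < W j i) ->
  exists K d, 0 < d /\ forall i j, (i < n)%nat -> (j < n)%nat -> d <= mpow n W K i j.
Proof.
  intros HW Hd Hsc.
  destruct (eventually_forall_lt n
              (fun j k => forall i, (i < n)%nat -> 0 < mpow n W k i j)) as [K HK].
  { intros j Hj.
    destruct (eventually_forall_lt n (fun i k => 0 < mpow n W k i j)) as [K HK].
    - intros i Hi. apply mpow_pos_eventually; auto.
    - exists K. intros k Hk i Hi. apply HK; auto. }
  exists K.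
  assert (Hcol : forall j, (j < n)%nat ->
            exists d, 0 < d /\ forall i, (i < n)%nat -> d <= mpow n W K i j).
  { intros j Hj. apply (finite_common_pos n (fun i d => d <= mpow n W K i j)).
    - intros; lra.
    - intros i Hi. exists (mpow n W K i j). split; [apply HK; auto | lra]. }
  destruct (finite_common_pos n
              (fun j d => forall i, (i < n)%nat -> d <= mpow n W K i j)) as [d [Hd0 Hdj]];
    [intros j d d' Hd' Hdd i Hi; specialize (Hdd i Hi); lra | exact Hcol |].
  exists d. split; auto.
Qed.

Fixpoint relax (d z : R) (y : nat -> R) (q : nat) : R :=
  match q with
  | O => z
  | S q => relax d z y q + d * (y q - relax d z y q)
  end.

Lemma relax_gap d a b y q : relax d b y q - relax d a y q = (1 - d) ^ q * (b - a).
Proof.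
  induction q as [|q IH]; simpl; [ring|].
  transitivity ((1 - d) * (relax d b y q - relax d a y q)); [ring|]. rewrite IH. ring.
Qed.

Section Contraction.

Variables (n : nat) (W : Mat) (K : nat) (d : R).
Hypothesis Hn : (0 < n)%nat.
Hypothesis HW : stochastic n W.
Hypothesis Hd : 0 < d.
Hypothesis HK : forall i j, (i < n)%nat -> (j < n)%nat -> d <= mpow n W K i j.

Lemma mpow_ge_after k i j :
  (K <= k)%nat -> (i < n)%nat -> (j < n)%nat -> d <= mpow n W k i j.
Proof.
  intros Hk Hi Hj. rewrite mpow_iter_mvec by auto.
  replace k with ((k - K) + K)%nat by lia. rewrite iter_mvec_add.
  refine (proj1 (iter_mvec_bounded n W (k - K) d 1 _ Hn HW _ i Hi)).
  intros l Hl. rewrite <- mpow_iter_mvec by auto. split; [apply HK; auto|].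
  apply (stochastic_le_1 n (mpow n W K)); auto. apply mpow_stochastic, HW.
Qed.

Section Iterates.

Variables (x : Vec) (a b : R).
Hypothesis Hx : vbounded n a b x.

Let y q := iter_mvec n W (q * K) x 0%nat.

(* After every block of [K] steps the bounds of the iterate are pulled towards
   its first entry [y q] by the fraction [d]. *)
Lemma iter_mvec_relax q :
  vbounded n (relax d a y q) (relax d b y q) (iter_mvec n W (q * K) x).
Proof.
  induction q as [|q IH]; [exact Hx|].
  intros i Hi. replace (S q * K)%nat with (K + q * K)%nat by lia.
  rewrite iter_mvec_add, iter_mvec_mpow by exact Hi.
  apply (mvec_contract n (mpow n W K) d); auto; [|lra].
  apply (mpow_stochastic n W K HW).
Qed.

Lemma iter_mvec_cv_const :
  exists c, forall i, (i < n)%nat -> Un_cv (fun k => iter_mvec n W k x i) c.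
Proof.
  set (lo := relax d a y). set (hi := relax d b y).
  assert (Hy : forall q, lo q <= y q <= hi q) by (intros q; apply iter_mvec_relax, Hn).
  assert (Hlo : Un_growing lo) by (intros q; specialize (Hy q); unfold lo, hi in *; simpl; nra).
  assert (Hhi : Un_decreasing hi) by (intros q; specialize (Hy q); unfold lo, hi in *; simpl; nra).
  assert (Hle : forall q, lo q <= hi q) by (intros q; specialize (Hy q); lra).
  assert (Hd1 : d <= 1) by (pose proof (mpow_ge_after K 0 0 (le_n K) Hn Hn);
    pose proof (stochastic_le_1 n _ 0 0 (mpow_stochastic n W K HW) Hn Hn); lra).
  assert (Hab : a <= b) by (pose proof (Hx 0%nat Hn); lra).
  destruct (nested_intervals lo hi Hlo Hhi Hle) as [c Hc].
  exists c. intros i Hi. apply (squeeze_cv lo hi _ c (fun q => q * K)%nat Hc).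
  - intros eps Heps. unfold lo, hi. setoid_rewrite relax_gap. apply exists_pow_mul_lt; lra.
  - intros q k Hk. replace k with ((k - q * K) + q * K)%nat by lia.
    rewrite iter_mvec_add.
    apply (iter_mvec_bounded n W (k - q * K) _ _ _ Hn HW (iter_mvec_relax q) i Hi).
Qed.

End Iterates.

Lemma mpow_col_cv j :
  (j < n)%nat -> exists c, forall i, (i < n)%nat -> Un_cv (fun k => mpow n W k i j) c.
Proof.
  intros Hj. destruct (iter_mvec_cv_const (fun l => mid l j) 0 1) as [c Hc].
  - intros i _. unfold mid. destruct (Nat.eqb i j); lra.
  - exists c. intros i Hi. apply (Un_cv_ext (fun k => iter_mvec n W k (fun l => mid l j) i)).
    + intros k. symmetry. apply mpow_iter_mvec; auto.
    + apply Hc, Hi.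
Qed.

End Contraction.

Theorem stochastic_mpow_cv n W :
  (0 < n)%nat -> stochastic n W -> (forall i, (i < n)%nat -> 0 < W i i) ->
  strongly_connected n (fun i j => 0 < W j i) ->
  exists pi : Vec,
    (forall i, (i < n)%nat -> 0 < pi i) /\
    rsum n pi = 1 /\
    (forall j, (j < n)%nat -> rsum n (fun i => pi i * W i j) = pi j) /\
    (forall i j, (i < n)%nat -> (j < n)%nat -> Un_cv (fun k => mpow n W k i j) (pi j)).
Proof.
  intros Hn HW Hdiag Hsc.
  destruct (mpow_uniformly_pos n W (proj1 HW) Hdiag Hsc) as (K & d & Hd & HK).
  destruct (functional_choice (fun j c => (j < n)%nat ->
      forall i, (i < n)%nat -> Un_cv (fun k => mpow n W k i j) c)) as [pi Hpi].
  { intros j. destruct (lt_dec j n) as [Hj|Hj].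
    - destruct (mpow_col_cv n W K d Hn HW Hd HK j Hj) as [c Hc]. exists c. auto.
    - exists 0. intros Hj'. contradiction. }
  assert (Hcv : forall i j, (i < n)%nat -> (j < n)%nat ->
            Un_cv (fun k => mpow n W k i j) (pi j)) by (intros; apply Hpi; auto).
  exists pi. split; [|split; [|split]]; [| | |exact Hcv].
  - intros j Hj. apply Rlt_le_trans with d; [exact Hd|].
    apply (Un_cv_ge_eventually _ _ d K (Hcv 0%nat j Hn Hj)).
    intros k Hk. apply (mpow_ge_after n W K d Hn HW HK); auto.
  - apply (UL_sequence (fun k => rsum n (mpow n W k 0%nat))).
    + apply CV_rsum. intros j Hj. apply Hcv; auto.
    + apply (Un_cv_ext (fun _ => 1)); [|apply Un_cv_const].
      intros k. symmetry. apply (mpow_stochastic n W k HW), Hn.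
  - (* Both sides are the limit of [(W ^ (k + 1)) 0 j = (W ^ k (W e_j)) 0]. *)
    intros j Hj.
    apply (UL_sequence (fun k => iter_mvec n W k (mvec n W (fun l => mid l j)) 0%nat)).
    + rewrite (rsum_ext _ _ (fun i => pi i * mvec n W (fun l => mid l j) i)).
      * apply iter_mvec_cv; auto.
      * intros i Hi. unfold mvec. rewrite rsum_mid_r; auto.
    + apply (Un_cv_ext (fun k => mpow n W (S k) 0%nat j)).
      * intros k. rewrite mpow_iter_mvec, iter_mvec_S_r by auto. reflexivity.
      * apply (Un_cv_shift (fun k => mpow n W k 0%nat j)), Hcv; auto.
Qed.

(** * Random switching *)

Definition mean_mat (M : nat -> Mat) (p : nat -> R) : Mat :=
  msum4 (fun m => mscal (p m) (M m)).

Lemma fold_right_Rplus_app (l1 l2 : list R) :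
  fold_right Rplus 0 (l1 ++ l2) = fold_right Rplus 0 l1 + fold_right Rplus 0 l2.
Proof. induction l1 as [|r l1 IH]; simpl; [ring|]. rewrite IH; ring. Qed.

Lemma fold_right_Rplus_scal {A} c (f : A -> R) l :
  fold_right Rplus 0 (map (fun s => c * f s) l) = c * fold_right Rplus 0 (map f l).
Proof. induction l as [|s l IH]; simpl; [ring|]. rewrite IH; ring. Qed.

(* Conditioning on the first switching mode [sigma_0]. *)
Lemma expect_state_S n M p k x0 i :
  expect_state n M p (S k) x0 i =
  p 1%nat * expect_state n M p k (mvec n (M 1%nat) x0) i +
  p 2%nat * expect_state n M p k (mvec n (M 2%nat) x0) i +
  p 3%nat * expect_state n M p k (mvec n (M 3%nat) x0) i +
  p 4%nat * expect_state n M p k (mvec n (M 4%nat) x0) i.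
Proof.
  unfold expect_state. cbn [seqs flat_map modes].
  rewrite !map_app, !fold_right_Rplus_app, !map_map, <- !fold_right_Rplus_scal.
  cbn [map fold_right]. rewrite Rplus_0_r, !Rplus_assoc.
  f_equal; [|f_equal; [|f_equal]]; f_equal; apply map_ext; intros; simpl; ring.
Qed.

Lemma mvec_mean_mat n M p x i :
  mvec n (mean_mat M p) x i =
  p 1%nat * mvec n (M 1%nat) x i + p 2%nat * mvec n (M 2%nat) x i +
  p 3%nat * mvec n (M 3%nat) x i + p 4%nat * mvec n (M 4%nat) x i.
Proof.
  unfold mvec, mean_mat, msum4, mscal.
  rewrite <- !rsum_scal, <- !rsum_plus. apply rsum_ext. intros; ring.
Qed.

Lemma expect_state_iter n M p k x0 i :
  (i < n)%nat -> expect_state n M p k x0 i = iter_mvec n (mean_mat M p) k x0 i.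
Proof.
  intros Hi. revert x0. induction k as [|k IH]; intros x0.
  - unfold expect_state. simpl. ring.
  - rewrite expect_state_S, !IH, iter_mvec_S_r, !iter_mvec_mpow by exact Hi.
    unfold mvec at 1 3 5 7 9.
    rewrite <- !rsum_scal, <- !rsum_plus. apply rsum_ext. intros j _.
    rewrite mvec_mean_mat. ring.
Qed.

Lemma consensus_in_mean_of_mean n M p :
  (0 < n)%nat -> stochastic n (mean_mat M p) ->
  (forall i, (i < n)%nat -> 0 < mean_mat M p i i) ->
  strongly_connected n (fun i j => 0 < mean_mat M p j i) ->
  consensus_in_mean n M p.
Proof.
  intros Hn HW Hdiag Hsc.
  destruct (stochastic_mpow_cv n _ Hn HW Hdiag Hsc) as (pi & Hpos & Hsum & Hfix & Hcv).
  exists pi. split; [|split; [|split; [|split]]]; auto.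
  intros x0 i Hi. apply (Un_cv_ext (fun k => iter_mvec n (mean_mat M p) k x0 i)).
  - intros k. symmetry. apply expect_state_iter, Hi.
  - apply iter_mvec_cv; auto.
Qed.

Section Modes.

Variables (n : nat) (M : nat -> Mat) (al be ga th : R).
Hypotheses (Hal : 0 < al) (Hbe : 0 < be) (Hga : 0 < ga) (Hth : 0 < th).
Hypothesis Hprob : al + be + ga + th = 1.
Hypothesis HM : forall m, (1 <= m <= 4)%nat -> stochastic n (M m).

Let W := mean_mat M (prob al be ga th).

Lemma mean_mat_ge_mode4 i j :
  (i < n)%nat -> (j < n)%nat -> th * M 4%nat i j <= W i j.
Proof.
  intros Hi Hj. unfold W, mean_mat, msum4, mscal, prob.
  pose proof (proj1 (HM 1 ltac:(lia)) i j Hi Hj).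
  pose proof (proj1 (HM 2 ltac:(lia)) i j Hi Hj).
  pose proof (proj1 (HM 3 ltac:(lia)) i j Hi Hj).
  assert (0 <= al * M 1%nat i j) by (apply Rmult_le_pos; lra).
  assert (0 <= be * M 2%nat i j) by (apply Rmult_le_pos; lra).
  assert (0 <= ga * M 3%nat i j) by (apply Rmult_le_pos; lra). lra.
Qed.

Lemma mean_mat_stochastic : stochastic n W.
Proof.
  split.
  - intros i j Hi Hj. pose proof (mean_mat_ge_mode4 i j Hi Hj).
    pose proof (proj1 (HM 4 ltac:(lia)) i j Hi Hj).
    assert (0 <= th * M 4%nat i j) by (apply Rmult_le_pos; lra). lra.
  - intros i Hi. unfold W, mean_mat, msum4, mscal, prob.
    rewrite !rsum_plus, !rsum_scal, !(fun m Hm => proj2 (HM m Hm) i Hi) by lia. lra.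
Qed.

(* The failure-free mode alone already makes the expected graph contain [G]. *)
Lemma consensus_in_mean_of_modes (a : nat -> nat -> bool) :
  (0 < n)%nat ->
  (forall i j, (i < n)%nat -> (j < n)%nat -> a i j = a j i) ->
  connected n a ->
  (forall i, (i < n)%nat -> 0 < M 4%nat i i) ->
  (forall i j, (i < n)%nat -> (j < n)%nat -> a i j = true -> 0 < M 4%nat i j) ->
  consensus_in_mean n M (prob al be ga th).
Proof.
  intros Hn Hsym Hconn Hdiag Hedge.
  assert (Hpos : forall i j, (i < n)%nat -> (j < n)%nat -> 0 < M 4%nat i j -> 0 < W i j).
  { intros i j Hi Hj H4. pose proof (mean_mat_ge_mode4 i j Hi Hj).
    assert (0 < th * M 4%nat i j) by (apply Rmult_lt_0_compat; auto). lra. }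
  apply consensus_in_mean_of_mean; [exact Hn | exact mean_mat_stochastic | |].
  - intros i Hi. apply Hpos; auto.
  - intros i j Hi Hj. apply (reach_mono n (fun u v => a u v = true)); [|apply Hconn; auto].
    intros u v Hu Hv Huv. apply Hpos, Hedge; auto. rewrite Hsym; auto.
Qed.

End Modes.

(** * Laplacians of the failure modes *)

Lemma Amode_bounds scen a m i j : 0 <= Amode scen a m i j <= aR a i j.
Proof.
  unfold Amode, aR.
  destruct (if scen then fails m i else fails m j), (a i j); lra.
Qed.

Lemma Amode_4 scen a i j : Amode scen a 4%nat i j = aR a i j.
Proof. unfold Amode. destruct scen; reflexivity. Qed.

Lemma Amode_diag scen a m i : a i i = false -> Amode scen a m i i = 0.
Proof.
  intros H. unfold Amode, aR. rewrite H.
  destruct (if scen then fails m i else fails m i); reflexivity.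
Qed.

Lemma rmaxn_ge n f i : (i < n)%nat -> f i <= rmaxn n f.
Proof.
  induction n as [|n IH]; intros Hi; [lia|]. simpl.
  destruct (Nat.eq_dec i n) as [->|Hin]; [apply Rmax_r|].
  eapply Rle_trans; [apply IH; lia | apply Rmax_l].
Qed.

Lemma rmaxn_nonneg n f : 0 <= rmaxn n f.
Proof.
  induction n as [|n IH]; simpl; [lra|]. eapply Rle_trans; [exact IH | apply Rmax_l].
Qed.

Lemma Amode_row_sum_bounds n scen a m i :
  (i < n)%nat -> 0 <= rsum n (Amode scen a m i) <= dmax n a.
Proof.
  intros Hi. split.
  - apply rsum_nonneg. intros. apply Amode_bounds.
  - apply Rle_trans with (deg n a i); [|apply (rmaxn_ge n (deg n a)); exact Hi].
    apply rsum_le. intros. apply Amode_bounds.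
Qed.

Lemma Lmode_entry n scen a m i j :
  Lmode n scen a m i j = mid i j * rsum n (Amode scen a m i) - Amode scen a m i j.
Proof. unfold Lmode, lap, mid. destruct (Nat.eqb i j); ring. Qed.

Lemma Lmode_row_sums n scen a m : row_sums n (Lmode n scen a m) 0.
Proof.
  intros i Hi. unfold Lmode, lap. rewrite rsum_minus.
  rewrite (rsum_ext _ _ (fun j => mid i j * rsum n (Amode scen a m i))).
  - rewrite rsum_mid_l by exact Hi. ring.
  - intros j Hj. unfold mid. destruct (Nat.eqb i j); ring.
Qed.

Definition lap_shift n scen a m (s t : R) : Mat :=
  fun i j => s * mid i j - t * Lmode n scen a m i j.

Section ShiftedLaplacian.

Variables (n : nat) (scen : bool) (a : nat -> nat -> bool) (m : nat) (s t : R).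
Hypothesis Hirr : forall i, (i < n)%nat -> a i i = false.
Hypothesis Ht : 0 <= t.

Let B := lap_shift n scen a m s t.

Lemma lap_shift_offdiag i j : i <> j -> B i j = t * Amode scen a m i j.
Proof. intros Hij. unfold B, lap_shift. rewrite Lmode_entry, !mid_neq by exact Hij. ring. Qed.

Lemma lap_shift_diag_ge i : (i < n)%nat -> s - t * dmax n a <= B i i.
Proof.
  intros Hi. unfold B, lap_shift. rewrite Lmode_entry, mid_eq, Amode_diag by auto.
  pose proof (Amode_row_sum_bounds n scen a m i Hi). nra.
Qed.

Lemma lap_shift_nonneg : t * dmax n a <= s -> mat_nonneg n B.
Proof.
  intros Hs i j Hi Hj. destruct (Nat.eq_dec i j) as [->|Hij].
  - pose proof (lap_shift_diag_ge j Hj). lra.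
  - rewrite lap_shift_offdiag by exact Hij. pose proof (Amode_bounds scen a m i j). nra.
Qed.

Lemma lap_shift_row_sums : row_sums n B s.
Proof.
  intros i Hi. unfold B, lap_shift. rewrite rsum_minus, !rsum_scal.
  fold (Lmode n scen a m i). rewrite Lmode_row_sums, mid_row_sums by exact Hi. ring.
Qed.

End ShiftedLaplacian.

(** * The sampled system *)

(* Covers the edgeless case, where [1 / dmax n a] is Rocq's junk value [/ 0]. *)
Lemma mul_dmax_lt_1 n a h : h < 1 / dmax n a -> h * dmax n a < 1.
Proof.
  intros Hh.
  assert (Hd : 0 <= dmax n a) by apply rmaxn_nonneg.
  destruct (Req_dec (dmax n a) 0) as [->|Hd0]; [lra|].
  unfold Rdiv in Hh. rewrite Rmult_1_l in Hh.
  apply Rmult_lt_compat_r with (r := dmax n a) in Hh; [|lra].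
  rewrite Rinv_l in Hh by exact Hd0. exact Hh.
Qed.

Lemma euler_step_lap_shift n scen a m h :
  madd mid (mscal (- h) (Lmode n scen a m)) = lap_shift n scen a m 1 h.
Proof.
  apply functional_extensionality. intros i. apply functional_extensionality. intros j.
  unfold madd, mscal, lap_shift. ring.
Qed.

Lemma euler_consensus_in_mean n a scen al be ga th h kbar :
  (0 < n)%nat -> sym_irrefl n a -> connected n a ->
  0 < al -> 0 < be -> 0 < ga -> 0 < th -> al + be + ga + th = 1 ->
  (1 <= kbar)%nat -> 0 < h -> h * dmax n a < 1 ->
  consensus_in_mean n
    (fun m => mpow n (madd mid (mscal (- h) (Lmode n scen a m))) kbar)
    (prob al be ga th).
Proof.
  intros Hn [Hsym Hirr] Hconn Hal Hbe Hga Hth Hprob Hk Hh Hhd.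
  replace (fun m => mpow n (madd mid (mscal (- h) (Lmode n scen a m))) kbar)
    with (fun m => mpow n (lap_shift n scen a m 1 h) kbar)
    by (apply functional_extensionality; intros m; rewrite euler_step_lap_shift; reflexivity).
  set (B := fun m => lap_shift n scen a m 1 h).
  assert (HB : forall m, stochastic n (B m)).
  { intros m. split; [apply lap_shift_nonneg; auto; lra | apply lap_shift_row_sums]. }
  assert (Hdiag : forall m i, (i < n)%nat -> 0 < B m i i).
  { intros m i Hi. pose proof (lap_shift_diag_ge n scen a m 1 h Hirr (Rlt_le _ _ Hh) i Hi).
    unfold B. lra. }
  apply (consensus_in_mean_of_modes n _ al be ga th Hal Hbe Hga Hth Hprob) with a; auto.
  - intros m _. apply mpow_stochastic, HB.
  - intros i Hi. apply mpow_diag_pos; [apply HB | exact Hi | apply Hdiag, Hi].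
  - intros i j Hi Hj Hij. destruct kbar as [|k]; [lia|].
    assert (Hneq : i <> j) by (intros Heq; subst j; rewrite Hirr in Hij by exact Hi; discriminate).
    apply mpow_entry_pos; [apply HB | exact Hi | exact Hj | apply Hdiag, Hi |].
    unfold B. rewrite lap_shift_offdiag, Amode_4 by exact Hneq. unfold aR. rewrite Hij. lra.
Qed.

(** * The limiting system *)

Lemma fact_INR_S k : INR (fact (S k)) = INR (S k) * INR (fact k).
Proof. rewrite fact_simpl, mult_INR. reflexivity. Qed.

(* Pascal's rule, in the form of the Cauchy product of [g a / a!] with [y ^ b / b!]. *)
Lemma cauchy_exp_pascal (g : nat -> R) (y : R) (k : nat) :
  sum_f_R0 (fun a => g (S a) / INR (fact a) * (/ INR (fact (k - a)) * y ^ (k - a))) k +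
  y * sum_f_R0 (fun a => g a / INR (fact a) * (/ INR (fact (k - a)) * y ^ (k - a))) k =
  INR (S k) *
  sum_f_R0 (fun a => g a / INR (fact a) * (/ INR (fact (S k - a)) * y ^ (S k - a))) (S k).
Proof.
  set (T := fun a => g a / INR (fact a) * (/ INR (fact (S k - a)) * y ^ (S k - a))).
  rewrite (scal_sum _ (S k) (INR (S k))).
  rewrite (sum_eq (fun i => T i * INR (S k)) (fun a => INR a * T a + INR (S k - a) * T a)).
  2:{ intros a Ha. rewrite minus_INR by exact Ha. unfold T. ring. }
  rewrite sum_plus. f_equal.
  - rewrite (decomp_sum (fun a => INR a * T a)) by lia. simpl pred.
    rewrite Rmult_0_l, Rplus_0_l. apply sum_eq. intros a Ha. unfold T.
    simpl (S k - S a)%nat. rewrite fact_INR_S.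
    field. repeat split; first [apply INR_fact_neq_0 | apply not_0_INR; lia].
  - rewrite tech5, Nat.sub_diag, Rmult_0_l, Rplus_0_r, scal_sum.
    apply sum_eq. intros a Ha. unfold T. replace (S k - a)%nat with (S (k - a)) by lia.
    rewrite fact_INR_S. simpl pow.
    field. repeat split; first [apply INR_fact_neq_0 | apply not_0_INR; lia].
Qed.

Definition exp_shift_coef n (N : Mat) (y : R) (k i j : nat) : R :=
  sum_f_R0 (fun a => mpow n N a i j / INR (fact a) * (/ INR (fact (k - a)) * y ^ (k - a))) k.

(* [M = N + y I]: since [y I] commutes with [N], [M ^ k] expands binomially. *)
Lemma mpow_shift_binomial n M N y k i j :
  (forall i j, M i j = N i j + y * mid i j) -> (i < n)%nat -> (j < n)%nat ->
  mpow n M k i j = INR (fact k) * exp_shift_coef n N y k i j.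
Proof.
  intros HMN. revert i j. induction k as [|k IH]; intros i j Hi Hj.
  - unfold exp_shift_coef. simpl. field.
  - change (mpow n M (S k) i j) with (rsum n (fun l => M i l * mpow n M k l j)).
    rewrite (rsum_ext _ _ (fun l => INR (fact k) * (N i l * exp_shift_coef n N y k l j) +
                                     INR (fact k) * y * (mid i l * exp_shift_coef n N y k l j))).
    2:{ intros l Hl. rewrite IH, HMN by auto. ring. }
    rewrite rsum_plus, !rsum_scal, rsum_mid_l by exact Hi.
    unfold exp_shift_coef at 1.
    rewrite (rsum_ext _ _ (fun l => sum_f_R0 (fun a => N i l * mpow n N a l j / INR (fact a) *
                                     (/ INR (fact (k - a)) * y ^ (k - a))) k)).
    2:{ intros l Hl. unfold exp_shift_coef. rewrite scal_sum. apply sum_eq. intros.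
        unfold Rdiv. ring. }
    rewrite rsum_sum_f_R0.
    rewrite (sum_eq _ (fun a => mpow n N (S a) i j / INR (fact a) *
                                (/ INR (fact (k - a)) * y ^ (k - a)))).
    2:{ intros a Ha. change (mpow n N (S a) i j) with (rsum n (fun l => N i l * mpow n N a l j)).
        unfold Rdiv.
        rewrite (rsum_ext _ _ (fun l => (/ INR (fact a) * (/ INR (fact (k - a)) * y ^ (k - a))) *
                                         (N i l * mpow n N a l j))) by (intros; ring).
        rewrite rsum_scal. ring. }
    rewrite fact_INR_S, Rmult_assoc, <- Rmult_plus_distr_l. unfold exp_shift_coef.
    rewrite (cauchy_exp_pascal (fun a => mpow n N a i j) y k). ring.
Qed.

Lemma exp_series x : Un_cv (fun K => sum_f_R0 (fun l => / INR (fact l) * x ^ l) K) (exp x).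
Proof. exact (proj2_sig (exist_exp x)). Qed.

Lemma mexp_row_sums n M E : row_sums n M 0 -> is_mexp n M E -> row_sums n E 1.
Proof.
  intros HM HE i Hi.
  apply (UL_sequence
           (fun K => rsum n (fun j => sum_f_R0 (fun k => mpow n M k i j / INR (fact k)) K))).
  - apply (CV_rsum n (fun K j => sum_f_R0 (fun k => mpow n M k i j / INR (fact k)) K)).
    intros j Hj. apply HE; auto.
  - apply (Un_cv_ext (fun _ => 1)); [|apply Un_cv_const]. intros K.
    rewrite (rsum_sum_f_R0 n K (fun j k => mpow n M k i j / INR (fact k))).
    rewrite (sum_eq _ (fun k => 0 ^ k / INR (fact k))).
    + induction K as [|K IH]; simpl; [field|]. rewrite <- IH. simpl pow. unfold Rdiv. ring.
    + intros k _. unfold Rdiv.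
      rewrite (rsum_ext _ _ (fun j => / INR (fact k) * mpow n M k i j)) by (intros; ring).
      rewrite rsum_scal, (mpow_row_sums n M 0 k HM i Hi). ring.
Qed.

Section NonnegExp.
Import Hierarchy.

Variables (n : nat) (N : Mat) (c : R).
Hypothesis HN : mat_nonneg n N.
Hypothesis HNc : row_sums n N c.

Let term i j l := mpow n N l i j / INR (fact l).

Lemma term_nonneg i j l : (i < n)%nat -> (j < n)%nat -> 0 <= term i j l.
Proof.
  intros Hi Hj. unfold term, Rdiv. apply Rmult_le_pos; [apply mpow_nonneg; auto|].
  apply Rlt_le, Rinv_0_lt_compat, INR_fact_lt_0.
Qed.

(* Entries of [N ^ l] are bounded by its row sums [c ^ l], so [exp c] dominates. *)
Lemma mexp_nonneg_series i j :
  (0 < n)%nat -> (i < n)%nat -> (j < n)%nat ->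
  exists T, Series.is_series (term i j) T /\ mid i j + N i j <= T.
Proof.
  intros Hn Hi Hj.
  assert (Hc : 0 <= c) by (rewrite <- (HNc 0%nat Hn); apply rsum_nonneg; intros; apply HN; lia).
  assert (Hgrow : Un_growing (sum_f_R0 (term i j))).
  { intros K. rewrite tech5. pose proof (term_nonneg i j (S K) Hi Hj). lra. }
  assert (Hexp_grow : Un_growing (sum_f_R0 (fun l => / INR (fact l) * c ^ l))).
  { intros K. rewrite tech5. assert (0 <= / INR (fact (S K)) * c ^ S K); [|lra].
    apply Rmult_le_pos; [apply Rlt_le, Rinv_0_lt_compat, INR_fact_lt_0 | apply pow_le; auto]. }
  assert (Hub : has_ub (sum_f_R0 (term i j))).
  { exists (exp c). intros v [K ->].
    apply Rle_trans with (sum_f_R0 (fun l => / INR (fact l) * c ^ l) K);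
      [|apply growing_ineq; [exact Hexp_grow | apply exp_series]].
    apply sum_Rle. intros l _. unfold term, Rdiv. rewrite Rmult_comm.
    apply Rmult_le_compat_l; [apply Rlt_le, Rinv_0_lt_compat, INR_fact_lt_0|].
    rewrite <- (mpow_row_sums n N c l HNc i Hi).
    apply (rsum_ge_term n (mpow n N l i)); auto. intros; apply mpow_nonneg; auto. }
  destruct (growing_cv _ Hgrow Hub) as [T HT]. exists T. split.
  - apply Series.is_series_Reals. exact HT.
  - pose proof (growing_ineq _ _ Hgrow HT 1%nat) as H1. simpl in H1. unfold term in H1.
    rewrite mpow_1 in H1 by exact Hj. simpl in H1. lra.
Qed.

(* [e^(N - c I) = e^(-c) e^N], via the Cauchy product of the two exponential series. *)
Lemma mexp_shift_entry M E i j (T : R) :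
  (forall i j, M i j = N i j + (- c) * mid i j) -> is_mexp n M E ->
  (i < n)%nat -> (j < n)%nat -> Series.is_series (term i j) T ->
  E i j = T * exp (- c).
Proof.
  intros HMN HE Hi Hj HT.
  set (b := fun l => / INR (fact l) * (- c) ^ l).
  assert (Hb : Series.is_series b (exp (- c))) by (apply Series.is_series_Reals, exp_series).
  assert (HTabs : Series.ex_series (fun l => Rabs (term i j l))).
  { exists T. apply Series.is_series_Reals.
    apply (Un_cv_ext (sum_f_R0 (term i j))); [|apply Series.is_series_Reals, HT].
    intros K. apply sum_eq. intros l _. rewrite Rabs_pos_eq; auto. apply term_nonneg; auto. }
  assert (Hbabs : Series.ex_series (fun l => Rabs (b l))).
  { exists (exp (Rabs (- c))). apply Series.is_series_Reals.
    apply (Un_cv_ext (sum_f_R0 (fun l => / INR (fact l) * Rabs (- c) ^ l))); [|apply exp_series].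
    intros K. apply sum_eq. intros l _. unfold b. rewrite Rabs_mult, <- RPow_abs.
    rewrite Rabs_inv, (Rabs_pos_eq (INR _)) by apply pos_INR. reflexivity. }
  pose proof (Series.is_series_mult _ _ _ _ HT Hb HTabs Hbabs) as Hprod.
  apply Series.is_series_Reals in Hprod.
  apply (UL_sequence _ _ _ (HE i j Hi Hj)).
  refine (Un_cv_ext _ _ _ _ Hprod). intros K. apply sum_eq. intros k _.
  rewrite (mpow_shift_binomial n M N (- c) k i j HMN Hi Hj).
  unfold exp_shift_coef, term, b. field. apply INR_fact_neq_0.
Qed.

Lemma mexp_lower_bound M E i j :
  (0 < n)%nat -> (forall i j, M i j = N i j + (- c) * mid i j) -> is_mexp n M E ->
  (i < n)%nat -> (j < n)%nat ->
  0 <= E i j /\ exp (- c) * (mid i j + N i j) <= E i j.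
Proof.
  intros Hn HMN HE Hi Hj.
  destruct (mexp_nonneg_series i j Hn Hi Hj) as (T & HT & HTge).
  rewrite (mexp_shift_entry M E i j T HMN HE Hi Hj HT).
  pose proof (mid_nonneg n i j Hi Hj). pose proof (HN i j Hi Hj). pose proof (exp_pos (- c)).
  split; nra.
Qed.

End NonnegExp.

Lemma exp_consensus_in_mean n a scen al be ga th D (E : nat -> Mat) :
  (0 < n)%nat -> sym_irrefl n a -> connected n a ->
  0 < al -> 0 < be -> 0 < ga -> 0 < th -> al + be + ga + th = 1 -> 0 < D ->
  (forall m, (1 <= m <= 4)%nat -> is_mexp n (mscal (- D) (Lmode n scen a m)) (E m)) ->
  consensus_in_mean n E (prob al be ga th).
Proof.
  intros Hn [Hsym Hirr] Hconn Hal Hbe Hga Hth Hprob HD HE.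
  set (c := D * dmax n a).
  set (N := fun m => lap_shift n scen a m c D).
  assert (HMN : forall m i j, mscal (- D) (Lmode n scen a m) i j = N m i j + (- c) * mid i j)
    by (intros; unfold N, lap_shift, mscal; ring).
  assert (HN : forall m, mat_nonneg n (N m))
    by (intros m; apply lap_shift_nonneg; [exact Hirr | lra | unfold c; lra]).
  assert (HNrows : forall m, row_sums n (N m) c) by (intros m; apply lap_shift_row_sums).
  assert (HLrows : forall m, row_sums n (mscal (- D) (Lmode n scen a m)) 0).
  { intros m i Hi. unfold mscal. rewrite rsum_scal.
    fold (Lmode n scen a m i). rewrite Lmode_row_sums by exact Hi. ring. }
  assert (Hlow : forall m, (1 <= m <= 4)%nat -> forall i j, (i < n)%nat -> (j < n)%nat ->
            0 <= E m i j /\ exp (- c) * (mid i j + N m i j) <= E m i j).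
  { intros m Hm i j Hi Hj.
    apply (mexp_lower_bound n (N m) c (HN m) (HNrows m) (mscal (- D) (Lmode n scen a m)));
      auto. }
  pose proof (exp_pos (- c)) as Hexp.
  apply (consensus_in_mean_of_modes n E al be ga th Hal Hbe Hga Hth Hprob) with a; auto.
  - intros m Hm. split; [intros i j Hi Hj; apply Hlow; auto|].
    apply (mexp_row_sums n _ _ (HLrows m)), HE, Hm.
  - intros i Hi. destruct (Hlow 4%nat ltac:(lia) i i Hi Hi) as [_ Hii]. rewrite mid_eq in Hii.
    pose proof (HN 4%nat i i Hi Hi). nra.
  - intros i j Hi Hj Hij. destruct (Hlow 4%nat ltac:(lia) i j Hi Hj) as [_ H4].
    assert (Hneq : i <> j) by (intros Heq; subst j; rewrite Hirr in Hij by exact Hi; discriminate).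
    unfold N in H4. rewrite lap_shift_offdiag, mid_neq, Amode_4 in H4 by exact Hneq.
    unfold aR in H4. rewrite Hij in H4. nra.
Qed.

Theorem theorem1
  (n : nat) (a : nat -> nat -> bool) (scen : bool)
  (al be ga th h : R) (kbar : nat) :
  (3 <= n)%nat ->
  sym_irrefl n a ->
  connected n a ->
  0 < al < 1 -> 0 < be < 1 -> 0 < ga < 1 -> 0 < th < 1 ->
  al + be + ga + th = 1 ->
  (1 <= kbar)%nat ->
  0 < h -> h < 1 / dmax n a ->
  strongly_connected n
    (fun i j => 0 < expected_adj scen a al be ga th j i) ->
  (* (i) sampled system x(t_{k+1}) = (I - h L_sigma_k)^kbar x(t_k) *)
  consensus_in_mean n
    (fun m => mpow n (madd mid (mscal (- h) (Lmode n scen a m))) kbar)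
    (prob al be ga th)
  /\
  (* (ii) limiting system x(t_{k+1}) = e^{-L_sigma_k Delta} x(t_k), Delta = kbar h *)
  (forall E : nat -> Mat,
     (forall m, (1 <= m <= 4)%nat ->
        is_mexp n (mscal (- (INR kbar * h)) (Lmode n scen a m)) (E m)) ->
     consensus_in_mean n E (prob al be ga th)).
Proof.
  intros Hn Hsi Hconn Hal Hbe Hga Hth Hprob Hk Hh Hhd _. split.
  - apply euler_consensus_in_mean; try lra; try lia; auto.
    apply mul_dmax_lt_1. exact Hhd.
  - intros E HE.
    apply (exp_consensus_in_mean n a scen al be ga th (INR kbar * h)); try lra; try lia; auto.
    apply Rmult_lt_0_compat; [apply lt_0_INR; lia | exact Hh].
Qed.
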